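(* Let $s\ge 1$ and $n_0,\dots,n_s,r$ be positive integers. If there exist integers $t\ge r$ and $l_0,\dots,l_s$ with $0\le l_i\le t$ for all $i$ and $\sum_{i=0}^s l_i=t$, such that $$\sum_{i=0}^s 2^t e^{-\frac{(t-l_i)_r}{(t)_r}n_i}\le 1,$$ then $ch(K_{n_0,\dots,n_s})>r$.
   Context: For an integer $a$ and a positive integer $r$, $(a)_r=a(a-1)\cdots(a-r+1)$ denotes the falling factorial. For a graph $G=(V,E)$, the choice number $ch(G)$ is the minimum integer $k$ such that for every assignment of a list $S(v)$ of at least $k$ colors to each vertex $v\in V$, there is a proper vertex coloring of $G$ assigning to each vertex $v$ a color from $S(v)$. $K_{n_0,\dots,n_s}$ denotes the complete $(s+1)$-partite graph with parts of sizes $n_0,\dots,n_s$. *)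

From Stdlib Require Import Reals.
From mathcomp Require Import all_boot.
Set Implicit Arguments. Unset Strict Implicit. Unset Printing Implicit Defensive.

Definition list_colorable (V : finType) (adj : rel V) (L : V -> seq nat) : Prop :=
  exists c : V -> nat,
    (forall v, c v \in L v) /\ (forall u v, adj u v -> c u != c v).

Definition choosable (V : finType) (adj : rel V) (k : nat) : Prop :=
  forall L : V -> seq nat, (forall v, k <= size (undup (L v))) ->
    list_colorable adj L.

(* ch(G) > r, with ch(G) = min { k | G is k-choosable }: i.e. every k for which
   G is k-choosable exceeds r. *)
Definition choice_number_gt (V : finType) (adj : rel V) (r : nat) : Prop :=
  forall k, choosable adj k -> r < k.

Definition Kmulti_vertex (s : nat) (n : 'I_s.+1 -> nat) : finType :=
  {i : 'I_s.+1 & 'I_(n i)}.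

Definition Kmulti_adj (s : nat) (n : 'I_s.+1 -> nat) : rel (Kmulti_vertex n) :=
  fun u v => tag u != tag v.

From Stdlib Require Import Reals Lra.
From mathcomp Require Import all_boot.

Set Implicit Arguments.
Unset Strict Implicit.
Unset Printing Implicit Defensive.

(* Give every vertex a uniformly random r-subset of the palette {0, ..., t-1}.
   For a part i and a set X of l_i colours, the probability that every list of
   part i meets X is (1 - C(t-l_i, r)/C(t, r))^(n_i) <= exp(-(t-l_i)_r/(t)_r n_i),
   and there are C(t, l_i) < 2^t such sets X; by the union bound and the
   hypothesis, some assignment avoids all these events.  On the other hand, a
   proper colouring from the lists uses pairwise disjoint sets of colours on the
   parts, so as sum l_i = t some part i uses at most l_i colours, and every list
   of part i meets an l_i-set containing them. *)

Lemma card_ffun_forall (V U : finType) (P : V -> pred U) :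
  #|[set f : {ffun V -> U} | [forall v, f v \in P v]]| = \prod_v #|P v|.
Proof.
rewrite (eq_card (B := family P)); last by move=> f; rewrite inE; apply/forallP/familyP.
by rewrite card_family foldrE big_map big_enum.
Qed.

Lemma card_bigcup_le (I T : finType) (P : pred I) (F : I -> {set T}) :
  #|\bigcup_(i | P i) F i| <= \sum_(i | P i) #|F i|.
Proof.
apply: (big_ind2 (fun (A : {set T}) n => #|A| <= n)) => //; first by rewrite cards0.
by move=> A m B n leAm leBn; rewrite (leq_trans (leq_card_setU A B)) ?leq_add.
Qed.

Lemma sum_card_disjoint (I T : finType) (F : I -> {set T}) :
  (forall i j, i != j -> [disjoint F i & F j]) -> \sum_i #|F i| <= #|T|.
Proof.
move=> disjF; under eq_bigr do rewrite -sum1_card.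
by rewrite -(partition_disjoint_bigcup _ _ disjF) sum1_card max_card.
Qed.

Lemma disjoint_pigeonhole (I T : finType) (F : I -> {set T}) (l : I -> nat) :
  (forall i j, i != j -> [disjoint F i & F j]) -> #|T| < \sum_i (l i).+1 ->
  exists i, #|F i| <= l i.
Proof.
move=> disjF lt_T_sum; apply/existsP; apply: contraLR lt_T_sum.
rewrite negb_exists -leqNgt => /forallP big_F.
apply: leq_trans (sum_card_disjoint disjF); apply: leq_sum => i _.
by rewrite ltnNge big_F.
Qed.

Lemma exists_superset_card (T : finType) (S : {set T}) k :
  #|S| <= k <= #|T| -> exists2 X : {set T}, S \subset X & #|X| = k.
Proof.
elim: k => [|k IHk] /andP[le_S_k le_k_T].
  by exists S => //; apply/eqP; rewrite -leqn0.
have [<-|ne_S_k] := eqVneq #|S| k.+1; first by exists S.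
have [X sub_S_X card_X] : exists2 X : {set T}, S \subset X & #|X| = k.
  by apply: IHk; rewrite -ltnS ltn_neqAle ne_S_k le_S_k ltnW.
have [x] : exists x, x \in ~: X.
  by apply/card_gt0P; rewrite cardsCs setCK card_X subn_gt0.
rewrite in_setC => x_notin_X.
exists (x |: X); last by rewrite cardsU1 x_notin_X card_X.
exact: subset_trans sub_S_X (subsetUr _ _).
Qed.

Lemma bin_lt_exp2 t l : 0 < t -> 'C(t, l) < 2 ^ t.
Proof.
move=> t_gt0; rewrite -[t in 'C(t, _)]card_ord -card_draws.
rewrite -[t in 2 ^ t]card_ord -cardsT -card_powerset; apply: proper_card.
rewrite properE; apply/andP; split; first by apply/subsetP => A _; rewrite powersetE subsetT.
apply/subsetPn; have [->|l_gt0] := posnP l.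
  by exists [set: 'I_t]; rewrite ?powersetE // inE cardsT card_ord -lt0n.
by exists set0; rewrite ?powersetE ?sub0set // inE cards0 eq_sym -lt0n.
Qed.

Lemma card_draws_meeting (T : finType) (X : {set T}) r :
  #|[set S : {set T} | (#|S| == r) && ~~ [disjoint S & X]]|
    = 'C(#|T|, r) - 'C(#|T| - #|X|, r).
Proof.
have avoid_sub : [set S : {set T} | S \subset ~: X & #|S| == r]
                    \subset [set S : {set T} | #|S| == r].
  by apply/subsetP => S; rewrite !inE => /andP[].
have -> : #|T| - #|X| = #|~: X| by rewrite -(cardsC X) addKn.
rewrite -card_draws -cards_draws -cardsDS //; apply: eq_card => S.
by rewrite !inE disjoints_subset; case: (S \subset _); case: (_ == r).
Qed.

Lemma choosableW (V : finType) (adj : rel V) k k' :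
  k <= k' -> choosable adj k -> choosable adj k'.
Proof. by move=> le_k_k' k_ch L size_L; apply: k_ch => v; apply: leq_trans (size_L v). Qed.

Section CompleteMultipartite.

Variables (I V : finType) (part : V -> I) (adj : rel V).
Hypothesis adj_parts : forall u v, part u != part v -> adj u v.

Definition part_of i : {set V} := [set v | part v == i].

Definition hits t (S : V -> {set 'I_t}) i (X : {set 'I_t}) :=
  [forall v, (part v == i) ==> ~~ [disjoint S v & X]].

Lemma colorable_hits t (l : I -> nat) (S : V -> {set 'I_t}) :
  (forall i, l i <= t) -> t < \sum_i (l i).+1 ->
  list_colorable adj (fun v => [seq val x | x <- enum (S v)]) ->
  exists i, exists2 X : {set 'I_t}, #|X| = l i & hits S i X.
Proof.
move=> l_le_t t_lt_sum [c [c_in c_proper]].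
pose used i := [set x : 'I_t | [exists v, (part v == i) && (c v == val x)]].
have used_disj i j : i != j -> [disjoint used i & used j].
  move=> ne_ij; rewrite -setI_eq0; apply/eqP/setP => x; rewrite !inE.
  apply/negP => /andP[/existsP[u /andP[/eqP part_u /eqP c_u]]].
  move=> /existsP[w /andP[/eqP part_w /eqP c_w]].
  have adj_uw : adj u w by apply: adj_parts; rewrite part_u part_w.
  by move: (c_proper u w adj_uw); rewrite c_u c_w eqxx.
have [i used_small] : exists i, #|used i| <= l i.
  by apply: disjoint_pigeonhole used_disj _; rewrite card_ord.
have [X used_sub_X card_X] : exists2 X : {set 'I_t}, used i \subset X & #|X| = l i.
  by apply: exists_superset_card; rewrite used_small card_ord l_le_t.
exists i, X => //; apply/forallP => v; apply/implyP => /eqP part_v.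
rewrite -setI_eq0; apply/set0Pn.
have /mapP[x x_in c_v] := c_in v.
exists x; rewrite inE -mem_enum x_in (subsetP used_sub_X) //.
by rewrite inE; apply/existsP; exists v; rewrite part_v c_v !eqxx.
Qed.

Definition hitting t r i (X : {set 'I_t}) :=
  [set S : {ffun V -> {set 'I_t}} |
    [forall v, S v \in [set A : {set 'I_t} |
                        (#|A| == r) && ((part v == i) ==> ~~ [disjoint A & X])]]].

Lemma prod_part (x y : nat) i :
  \prod_v (if part v == i then x else y) = x ^ #|part_of i| * y ^ #|~: part_of i|.
Proof.
rewrite (bigID (fun v => part v == i)) /= -!prod_nat_const.
congr (_ * _).
  by apply: eq_big => [v|v ->] //; rewrite inE.
by apply: eq_big => [v|v /negPf->] //; rewrite !inE.
Qed.

Lemma card_hitting t r i (X : {set 'I_t}) :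
  #|hitting r i X| = ('C(t, r) - 'C(t - #|X|, r)) ^ #|part_of i| * 'C(t, r) ^ #|~: part_of i|.
Proof.
rewrite card_ffun_forall -prod_part; apply: eq_bigr => v _.
case: (part v == i).
  have := card_draws_meeting X r; rewrite card_ord => <-.
  by apply: eq_card => A; rewrite !inE.
have := card_draws 'I_t r; rewrite card_ord => <-.
by apply: eq_card => A; rewrite !inE andbT.
Qed.

Definition assignments t r :=
  [set S : {ffun V -> {set 'I_t}} | [forall v, S v \in [set A : {set 'I_t} | #|A| == r]]].

Lemma card_assignments t r : #|assignments t r| = 'C(t, r) ^ #|V|.
Proof.
have := card_draws 'I_t r; rewrite card_ord => <-.
by rewrite card_ffun_forall -prod_nat_const.
Qed.

Lemma exists_unhit_assignment t r (l : I -> nat) :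
  \sum_i 'C(t, l i) * (('C(t, r) - 'C(t - l i, r)) ^ #|part_of i| * 'C(t, r) ^ #|~: part_of i|)
    < 'C(t, r) ^ #|V| ->
  exists2 S : {ffun V -> {set 'I_t}},
    (forall v, #|S v| = r) & forall i (X : {set 'I_t}), #|X| = l i -> ~~ hits S i X.
Proof.
move=> count_lt.
pose bad := \bigcup_i \bigcup_(X : {set 'I_t} | #|X| == l i) hitting r i X.
have /subsetPn[S S_ok S_good] : ~~ (assignments t r \subset bad).
  apply: contraTN count_lt => /subset_leq_card; rewrite card_assignments -leqNgt.
  move/leq_trans; apply; apply: leq_trans (card_bigcup_le _ _) _; apply: leq_sum => i _.
  apply: leq_trans (card_bigcup_le _ _) _.
  pose hit_count := ('C(t, r) - 'C(t - l i, r)) ^ #|part_of i| * 'C(t, r) ^ #|~: part_of i|.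
  rewrite (eq_bigr (fun _ => hit_count)).
    rewrite sum_nat_const; have := card_draws 'I_t (l i); rewrite card_ord => <-.
    by apply: eq_leq; congr (_ * _); apply: eq_card => X; rewrite !inE.
  by move=> X /eqP card_X; rewrite /hit_count -card_X; apply: card_hitting.
exists S => [v|i X card_X].
  by move: S_ok; rewrite inE => /forallP/(_ v); rewrite inE => /eqP.
apply: contra S_good => hits_SX; apply/bigcupP; exists i => //.
apply/bigcupP; exists X; first by rewrite card_X.
rewrite inE; apply/forallP => v; rewrite inE.
move: S_ok; rewrite inE => /forallP/(_ v); rewrite inE => -> /=.
by move: hits_SX => /forallP/(_ v).
Qed.

Lemma not_choosable t r (l : I -> nat) :
  (forall i, l i <= t) -> t < \sum_i (l i).+1 ->
  \sum_i 'C(t, l i) * (('C(t, r) - 'C(t - l i, r)) ^ #|part_of i| * 'C(t, r) ^ #|~: part_of i|)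
    < 'C(t, r) ^ #|V| ->
  ~ choosable adj r.
Proof.
move=> l_le_t t_lt_sum count_lt r_choosable.
have [S card_S unhit] := exists_unhit_assignment count_lt.
pose L v := [seq val x | x <- enum (S v)].
have size_L v : r <= size (undup (L v)).
  rewrite undup_id ?size_map -?cardE ?card_S //.
  by rewrite map_inj_uniq ?enum_uniq //; apply: val_inj.
have [i [X card_X hits_SX]] := colorable_hits l_le_t t_lt_sum (r_choosable L size_L).
by move: (unhit i X card_X); rewrite hits_SX.
Qed.

End CompleteMultipartite.

Open Scope R_scope.

Lemma INR_expn (a k : nat) : INR (a ^ k)%N = INR a ^ k.
Proof. by elim: k => [|k IHk] //; rewrite expnS mult_INR IHk. Qed.

Lemma INR_sum (I : finType) (F : I -> nat) :
  INR (\sum_i F i) = \big[Rplus/R0]_i INR (F i).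
Proof. by apply: (big_morph INR plus_INR). Qed.

Lemma Rsum_mult_l (I : finType) (c : R) (F : I -> R) :
  c * \big[Rplus/R0]_i F i = \big[Rplus/R0]_i (c * F i).
Proof. by apply: (big_morph (Rmult c) (Rmult_plus_distr_l c) (Rmult_0_r c)). Qed.

Lemma Rsum_lt_ord (m : nat) (F G : 'I_m.+1 -> R) :
  (forall i, F i < G i) -> \big[Rplus/R0]_i F i < \big[Rplus/R0]_i G i.
Proof.
move=> lt_FG; rewrite !big_ord_recl; apply: Rplus_lt_le_compat; first exact: lt_FG.
apply: (big_ind2 Rle) => [|x1 x2 y1 y2|i _]; [lra | lra | exact/Rlt_le/lt_FG].
Qed.

Lemma exp_pow (x : R) (k : nat) : exp x ^ k = exp (x * INR k).
Proof.
elim: k => [|k IHk]; first by rewrite Rmult_0_r exp_0.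
by rewrite [LHS]/= IHk S_INR -exp_plus; congr exp; ring.
Qed.

Lemma one_sub_pow_le_exp (x : R) (k : nat) :
  0 <= x <= 1 -> (1 - x) ^ k <= exp (- (x * INR k)).
Proof.
move=> x01; rewrite Ropp_mult_distr_l -exp_pow; apply: pow_incr.
by have := exp_ineq1_le (- x); lra.
Qed.

Lemma INR_subn_pow_le (a b k : nat) : (b <= a)%N -> (0 < a)%N ->
  INR ((a - b) ^ k) <= INR a ^ k * exp (- (INR b / INR a * INR k)).
Proof.
move=> le_b_a a_gt0; rewrite INR_expn.
have a_pos : 0 < INR a by apply/lt_0_INR/ltP.
have b_le_a : INR b <= INR a by apply/le_INR/leP.
have -> : INR (a - b) = INR a * (1 - INR b / INR a).
  by rewrite subnE minus_INR; [field; lra | apply/leP].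
rewrite Rpow_mult_distr; apply: Rmult_le_compat_l; first exact/pow_le/Rlt_le.
apply: one_sub_pow_le_exp.
have b_eq : INR b = INR b / INR a * INR a by field; lra.
have := pos_INR b; nra.
Qed.

Lemma sum_lt_of_exp_bound (s t a N : nat) (b c m k : 'I_s.+1 -> nat) :
  (0 < a)%N -> (forall i, b i <= a)%N -> (forall i, c i < 2 ^ t)%N ->
  (forall i, m i + k i = N)%N ->
  \big[Rplus/R0]_i (INR 2 ^ t * exp (- (INR (b i) / INR a * INR (m i)))) <= 1 ->
  (\sum_i c i * ((a - b i) ^ m i * a ^ k i) < a ^ N)%N.
Proof.
move=> a_gt0 le_b_a lt_c_2t sum_mk exp_bound.
have a_pos : 0 < INR a by apply/lt_0_INR/ltP.
apply/ltP/INR_lt; rewrite INR_sum.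
apply: (Rlt_le_trans _ (INR (a ^ N) *
  \big[Rplus/R0]_i (INR 2 ^ t * exp (- (INR (b i) / INR a * INR (m i)))))); last first.
  rewrite -[X in _ <= X]Rmult_1_r; apply: Rmult_le_compat_l exp_bound.
  exact: pos_INR.
rewrite Rsum_mult_l; apply: Rsum_lt_ord => i.
set E := exp _; have E_pos : 0 < E by apply: exp_pos.
have c_lt : INR (c i) < INR 2 ^ t by rewrite -INR_expn; apply/lt_INR/ltP.
rewrite -(sum_mk i) expnD !mult_INR !INR_expn.
have AEK_pos : 0 < INR a ^ m i * E * INR a ^ k i.
  by apply: Rmult_lt_0_compat; [apply: Rmult_lt_0_compat|]; try apply: pow_lt.
apply: (Rle_lt_trans _ (INR (c i) * (INR a ^ m i * E * INR a ^ k i))).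
  apply: Rmult_le_compat_l; first exact: pos_INR.
  apply: Rmult_le_compat_r; first exact/pow_le/Rlt_le.
  by rewrite -INR_expn; apply: INR_subn_pow_le.
apply: Rlt_le_trans (Rmult_lt_compat_r _ _ _ AEK_pos c_lt) (Req_le _ _ _); ring.
Qed.

Lemma ffact_ratio_bin (a t r : nat) : (r <= t)%N ->
  INR (a ^_ r) / INR (t ^_ r) = INR 'C(a, r) / INR 'C(t, r).
Proof.
move=> le_r_t; rewrite -!bin_ffact !mult_INR; field.
by split; apply/not_0_INR/eqP; rewrite -lt0n ?fact_gt0 ?bin_gt0.
Qed.

Close Scope R_scope.

Lemma card_Kmulti_part s (n : 'I_s.+1 -> nat) i :
  #|part_of (tag : Kmulti_vertex n -> 'I_s.+1) i| = n i.
Proof.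
have Tagged_inj : injective (fun x : 'I_(n i) => Tagged (fun j => 'I_(n j)) x).
  by move=> x y; apply: eq_from_Tagged.
rewrite -[n i]card_ord -cardsT -(card_imset _ Tagged_inj).
apply: eq_card => -[j x]; rewrite !inE /=.
by apply/eqP/imsetP => [<-|[y _ /(congr1 tag) //]]; exists x.
Qed.

Theorem lemma6p1 (s : nat) (n : 'I_s.+1 -> nat) (r : nat) :
  1 <= s -> (forall i, 0 < n i) -> 0 < r ->
  (exists (t : nat) (l : 'I_s.+1 -> nat),
      r <= t /\ (forall i, l i <= t) /\ \sum_(i < s.+1) l i = t /\
      Rle (\big[Rplus/R0]_(i < s.+1)
             Rmult (pow (INR 2) t)
                   (exp (Ropp (Rmult (Rdiv (INR ((t - l i) ^_ r)) (INR (t ^_ r)))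
                                     (INR (n i))))))
          R1) ->
  choice_number_gt (@Kmulti_adj s n) r.
Proof.
move=> _ _ r_gt0 [t [l [le_r_t [le_l_t [sum_l exp_bound]]]]] k k_choosable.
rewrite ltnNge; apply/negP => le_k_r.
apply: (not_choosable (part := tag) _ le_l_t _ _ (choosableW le_k_r k_choosable)) => //.
  under eq_bigr do rewrite -addn1.
  by rewrite big_split /= sum_l sum1_card card_ord addnS ltnS leq_addr.
apply: sum_lt_of_exp_bound => [|i|i|i|].
- by rewrite bin_gt0.
- by rewrite leq_bin2l ?leq_subr.
- by apply: bin_lt_exp2; apply: leq_trans le_r_t.
- by rewrite cardsC.
under eq_bigr do rewrite card_Kmulti_part -ffact_ratio_bin //.
exact: exp_bound.
Qed.
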